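(* Let $\mathcal{M}$ be a circular orientable embedding of a connected graph $X$ and let $U$ be the vertex-face transition matrix of $\mathcal{M}$. Then $U^T$ is the vertex-face transition matrix of the dual embedding $\mathcal{M}^*$ of $\mathcal{M}$. Here each arc $(u,v)$ of $X$ is identified with the arc of the dual graph that crosses the edge $\{u,v\}$ and has tail the face $f_{uv}$; the vertex-face transition matrix of $\mathcal{M}^*$ is defined with the same construction as for $\mathcal{M}$.
   Context: Setting. $X$ is a connected graph with $n$ vertices and $\ell$ edges, and $\mathcal{M}$ is an embedding of $X$ on a closed orientable surface. The embedding is circular: it is cellular and every face is bounded by a cycle. An arc is an ordered pair $(u,v)$ with $\{u,v\}$ an edge, and $u$ is its tail. Consistent orientation. Fix an orientation of all face boundaries such that, for each edge shared by faces $f$ and $h$, the direction the edge receives in $f$ is opposite to the direction it receives in $h$. Each face then gives a facial walk, which is a directed cycle, and every arc lies in exactly one facial walk. Write $f_{uv}$ for the face whose facial walk contains $(u,v)$, and $\deg(f)$ for the length of face $f$. Matrices. $M$ is the arc-face incidence matrix: $M_{(a,b),f}=1$ iff $f=f_{ab}$, and $0$ otherwise. $N$ is the arc-tail incidence matrix: $N_{(a,b),u}=1$ iff $a=u$, and $0$ otherwise. $\widehat M$ and $\widehat N$ are obtained from $M$ and $N$ by scaling each column to unit length. The vertex-face transition matrix is $U=(2\widehat M\widehat M^T-I)(2\widehat N\widehat N^T-I)$. Dual embedding. The dual embedding $\mathcal{M}^*$ has the faces of $\mathcal{M}$ as vertices. Its edges cross the edges of $X$, and its faces correspond to the vertices of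 $X$. *)

From HB Require Import structures.
From mathcomp Require Import all_boot all_order all_algebra.
Set Implicit Arguments. Unset Strict Implicit. Unset Printing Implicit Defensive.
Import Order.TTheory GRing.Theory Num.Theory.
Local Open Scope ring_scope.

(* Combinatorial (oriented) map data: vertices 'I_n, faces 'I_k, arcs 'I_d.
   tl a   = tail of arc a
   fc a   = the face f_a whose facial walk contains arc a
   rv a   = reverse arc (v,u) of a = (u,v)
   nx a   = successor of a in its (consistently oriented) facial walk *)
Record orimap (n k d : nat) := OMap {
  tl : 'I_d -> 'I_n ;
  fc : 'I_d -> 'I_k ;
  rv : 'I_d -> 'I_d ;
  nx : 'I_d -> 'I_d }.

Definition hd n k d (E : orimap n k d) (a : 'I_d) : 'I_n := tl E (rv E a).

Definition adj n k d (E : orimap n k d) : rel 'I_n :=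
  fun u v => [exists a, (tl E a == u) && (hd E a == v)].

(* E is a circular (orientable, cellular) embedding of a connected simple graph:
   - arcs come in reverse pairs (rv fixed-point-free involution, with head = tail of reverse);
   - X is simple: no loops, an arc is determined by (tail, head); X is connected;
   - every vertex and every face is incident to some arc;
   - nx is a permutation of the arcs, facial walks are directed walks;
   - faces are exactly the nx-orbits (each arc in exactly one facial walk);
   - arcs with a common tail form a single orbit of the rotation nx \o rv
     (rotation system: cellular embedding on an orientable surface);
   - circular: each facial walk is a cycle (length >= 3, no repeated vertex). *)
Definition circ_emb n k d (E : orimap n k d) : Prop :=
  [/\ involutive (rv E), (forall a, rv E a != a),
      (forall a, tl E a != hd E a),
      injective (fun a => (tl E a, hd E a))
    & (forall u v, connect (adj E) u v)] /\
  [/\ (forall u, exists a, tl E a = u), (forall f, exists a, fc E a = f),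
      injective (nx E), (forall a, tl E (nx E a) = hd E a)
    & (forall a b, (fc E a == fc E b) = fconnect (nx E) a b)] /\
  (forall a b, (tl E a == tl E b) = fconnect (nx E \o rv E) a b) /\
  (forall a b, fc E a = fc E b -> tl E a = tl E b -> a = b) /\
  (forall a, 3 <= order (nx E) a)%N.

(* Dual embedding: vertices = faces of E, faces = vertices of E; arc a = (u,v)
   of X is identified with the dual arc crossing {u,v} with tail f_uv.
   Its reverse is the dual arc of (v,u); the dual facial walk of the dual
   face corresponding to vertex u proceeds a -> nx (rv a). *)
Definition dual n k d (E : orimap n k d) : orimap k n d :=
  OMap (fc E) (tl E) (rv E) (fun a => nx E (rv E a)).

Definition colnormalize (R : rcfType) m p (A : 'M[R]_(m, p)) : 'M[R]_(m, p) :=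
  \matrix_(i, j) (A i j / Num.sqrt (\sum_(i' < m) A i' j ^+ 2)).

Definition arcface (R : rcfType) n k d (E : orimap n k d) : 'M[R]_(d, k) :=
  \matrix_(a, f) (fc E a == f)%:R.
Definition arctail (R : rcfType) n k d (E : orimap n k d) : 'M[R]_(d, n) :=
  \matrix_(a, u) (tl E a == u)%:R.

Definition transmat (R : rcfType) n k d (E : orimap n k d) : 'M[R]_d :=
  let Mh := colnormalize (arcface R E) in
  let Nh := colnormalize (arctail R E) in
  (2%:R *: (Mh *m Mh^T) - 1%:M) *m (2%:R *: (Nh *m Nh^T) - 1%:M).

From HB Require Import structures.
From mathcomp Require Import all_boot all_order all_algebra.
Import Order.TTheory GRing.Theory Num.Theory.
Local Open Scope ring_scope.

(* Both factors of U are symmetric reflections, so U^T is their product in the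
   opposite order; and passing to the dual swaps the roles of faces and tails,
   i.e. exchanges the two factors. *)

Lemma trmx_reflection (R : comPzRingType) m p (c : R) (A : 'M[R]_(m, p)) :
  (c *: (A *m A^T) - 1%:M)^T = c *: (A *m A^T) - 1%:M.
Proof. by rewrite linearB /= linearZ /= trmx_mul trmxK trmx1. Qed.

Lemma arcface_dual (R : rcfType) n k d (E : orimap n k d) :
  arcface R (dual E) = arctail R E.
Proof. by []. Qed.

Lemma arctail_dual (R : rcfType) n k d (E : orimap n k d) :
  arctail R (dual E) = arcface R E.
Proof. by []. Qed.

Theorem lemma2p1 (R : rcfType) (n k d : nat) (E : orimap n k d) :
  circ_emb E -> transmat R (dual E) = (transmat R E)^T.
Proof.
move=> _; rewrite /transmat arcface_dual arctail_dual.
by rewrite trmx_mul !trmx_reflection.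
Qed.
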